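(* Let $\beta\ge 0$ be real, let $n\ge 0$ be fixed, and let $a_{n,0},a_{n,1},\dots,a_{n,n}$ be real numbers, with the convention $a_{n,k}=0$ for $k>n$. Define, for $0<t\le\pi$, \[ K_n(t):=\sum_{k=0}^{n}a_{n,k}\frac{\sin\left(k+\frac12\right)t}{2\sin\frac t2}, \] let $\tau$ denote the integer part of $\pi/t$, and let $A_{n,\tau}:=\sum_{r=0}^{\tau}a_{n,r}$. (i) If \[ \sum_{k=m}^{\infty}(k+1)^{\beta}\left|\frac{a_{n,k}}{(k+1)^{\beta}}-\frac{a_{n,k+1}}{(k+2)^{\beta}}\right|=\mathcal{O}(a_{n,m})\quad\text{for } 0\le m\le n, \] then, uniformly in $0<t\le\pi$, $|K_n(t)|=\mathcal{O}\left(t^{-1}A_{n,\tau}\right)$. (ii) If \[ \sum_{k=0}^{m-1}(k+1)^{\beta}\left|\frac{a_{n,k}}{(k+1)^{\beta}}-\frac{a_{n,k+1}}{(k+2)^{\beta}}\right|=\mathcal{O}(a_{n,m})\quad\text{for } 0\le m\le n, \] then $|K_n(t)|=\mathcal{O}\left(a_{n,n}/t^2\right)$ for $0<t\le\pi$.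
   Context: The notation $u=\mathcal{O}(v)$ means $u\le Cv$ for some positive constant $C$. *)

From Stdlib Require Import Reals List.
Open Scope R_scope.

Definition lsum (l : list nat) (f : nat -> R) : R :=
  fold_right Rplus 0 (map f l).

(* sum_{k=m}^{n} f k (empty if n < m). *)
Definition sum_mn (m n : nat) (f : nat -> R) : R := lsum (seq m (S n - m)) f.

Definition pw (k : nat) (beta : R) : R := Rpower (INR k + 1) beta.

Definition dterm (beta : R) (a : nat -> R) (k : nat) : R :=
  pw k beta * Rabs (a k / pw k beta - a (S k) / pw (S k) beta).

Definition Kn (n : nat) (a : nat -> R) (t : R) : R :=
  sum_mn 0 n (fun k => a k * sin ((INR k + / 2) * t) / (2 * sin (t / 2))).

Definition tau (t : R) : nat := Z.to_nat (Int_part (PI / t)).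

Definition Atau (a : nat -> R) (t : R) : R := sum_mn 0 (tau t) a.

From Stdlib Require Import Reals List Lia Psatz ZArith.
Open Scope R_scope.

(* Write [D_k(t)] for the Dirichlet kernel term, so that [K_n(t) = sum_k a_k D_k(t)], with
   [|D_k(t)| <= 4/t] and, since [D_k] telescopes in [cos (k t)], partial sums of [D_k(t)]
   bounded by [32/t^2]. Two Abel summations against the nondecreasing weights
   [w_k = (k+1)^beta] turn the latter into
   [|sum_(k=p..n) a_k D_k(t)| <= 64/t^2 sum_(k=p..n) (k+1)^beta |a_k/w_k - a_(k+1)/w_(k+1)|].
   For (ii) take [p = 0]: the right-hand sum is at most [(1+C) a_n].
   For (i) the hypothesis forces [a >= 0] and [a_m/w_m <= (1+C) a_k/w_k] for [k <= m], so
   [a_m] is dominated by each of [a_(m/2), ..., a_(m-1)], whence [m a_m = O(A_(m-1))].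
   Splitting [K_n(t)] at [tau], the head is [O(A_tau/t)] by the trivial bound and the tail is
   [O(a_(tau+1)/t^2) = O(A_tau/t)] because [pi/t < tau+1]. *)

Lemma Rdiv_nonneg x y : 0 <= x -> 0 < y -> 0 <= x / y.
Proof. intros hx hy. apply Rmult_le_pos; [lra | apply Rlt_le, Rinv_0_lt_compat, hy]. Qed.

Lemma lsum_app l1 l2 f : lsum (l1 ++ l2) f = lsum l1 f + lsum l2 f.
Proof. induction l1 as [|x l1 IH]; unfold lsum in *; simpl; [ring | rewrite IH; ring]. Qed.

Lemma lsum_seq_add p L1 L2 f :
  lsum (seq p (L1 + L2)) f = lsum (seq p L1) f + lsum (seq (p + L1) L2) f.
Proof. now rewrite seq_app, lsum_app. Qed.

Lemma lsum_seqS p L f : lsum (seq p (S L)) f = lsum (seq p L) f + f (p + L)%nat.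
Proof. rewrite seq_S, lsum_app. unfold lsum; simpl; ring. Qed.

Lemma lsum_ext l f g : (forall k, In k l -> f k = g k) -> lsum l f = lsum l g.
Proof.
induction l as [|x l IH]; intros H; unfold lsum in *; simpl; auto.
rewrite (H x), IH; simpl; auto. intros; apply H; simpl; auto.
Qed.

Lemma lsum_le l f g : (forall k, In k l -> f k <= g k) -> lsum l f <= lsum l g.
Proof.
induction l as [|x l IH]; intros H; unfold lsum in *; simpl; [lra|].
apply Rplus_le_compat; [apply H; simpl; auto | apply IH; intros; apply H; simpl; auto].
Qed.

Lemma lsum_const l c : lsum l (fun _ => c) = INR (length l) * c.
Proof.
induction l; unfold lsum in *; simpl length; rewrite ?S_INR; simpl; [ring | rewrite IHl; ring].
Qed.

Lemma lsum_scal_l l c f : lsum l (fun k => c * f k) = c * lsum l f.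
Proof. induction l; unfold lsum in *; simpl; [ring | rewrite IHl; ring]. Qed.

Lemma lsum_nonneg l f : (forall k, In k l -> 0 <= f k) -> 0 <= lsum l f.
Proof.
intros H. rewrite <- (Rmult_0_l (INR (length l))), Rmult_comm, <- lsum_const. now apply lsum_le.
Qed.

Lemma Rabs_lsum_le l f : Rabs (lsum l f) <= lsum l (fun k => Rabs (f k)).
Proof.
induction l as [|x l IH]; unfold lsum in *; simpl; [rewrite Rabs_R0; lra|].
eapply Rle_trans; [apply Rabs_triang | lra].
Qed.

Lemma lsum_telescope p L g :
  lsum (seq p L) (fun j => g (S j) - g j) = g (p + L)%nat - g p.
Proof.
induction L as [|L IH]; [rewrite Nat.add_0_r; unfold lsum; simpl; ring|].
rewrite lsum_seqS, IH, Nat.add_succ_r. ring.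
Qed.

Lemma sum_mn_lsum p L f : sum_mn p (p + L) f = lsum (seq p (S L)) f.
Proof. unfold sum_mn. do 2 f_equal. lia. Qed.

Lemma sum_mn_Sr p k f : (p <= k)%nat -> sum_mn p (S k) f = sum_mn p k f + f (S k).
Proof.
intros hpk. replace k with (p + (k - p))%nat by lia.
rewrite <- Nat.add_succ_r, !sum_mn_lsum, lsum_seqS, Nat.add_succ_r. reflexivity.
Qed.

Lemma sum_mn_split m k n f : (m <= k <= S n)%nat ->
  sum_mn m n f = lsum (seq m (k - m)) f + sum_mn k n f.
Proof.
intros hk. unfold sum_mn. replace (S n - m)%nat with (k - m + (S n - k))%nat by lia.
rewrite lsum_seq_add. do 3 f_equal. lia.
Qed.

Lemma Rabs_lsum_le_nonneg l a v M : (forall k, 0 <= a k) -> (forall k, Rabs (v k) <= M) ->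
  Rabs (lsum l (fun k => a k * v k)) <= M * lsum l a.
Proof.
intros ha hv. eapply Rle_trans; [apply Rabs_lsum_le|]. rewrite <- lsum_scal_l.
apply lsum_le. intros k _. rewrite Rabs_mult, Rabs_pos_eq by auto.
specialize (ha k). specialize (hv k). nra.
Qed.

Lemma lsum_by_parts p L b v :
  lsum (seq p (S L)) (fun k => b k * v k) =
  lsum (seq p L) (fun k => (b k - b (S k)) * sum_mn p k v)
  + b (p + L)%nat * sum_mn p (p + L) v.
Proof.
induction L as [|L IH].
- rewrite Nat.add_0_r. replace (sum_mn p p v) with (v p)
    by (unfold sum_mn; rewrite Nat.sub_succ_l, Nat.sub_diag by lia; unfold lsum; simpl; ring).
  unfold lsum; simpl. ring.
- rewrite lsum_seqS, IH, lsum_seqS, Nat.add_succ_r, sum_mn_Sr by lia. ring.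
Qed.

Lemma Rabs_lsum_by_parts_le p L b v B :
  (forall k, (p <= k <= p + L)%nat -> Rabs (sum_mn p k v) <= B k) ->
  Rabs (lsum (seq p (S L)) (fun k => b k * v k)) <=
  lsum (seq p L) (fun k => Rabs (b k - b (S k)) * B k) + Rabs (b (p + L)%nat) * B (p + L)%nat.
Proof.
intros hB. rewrite lsum_by_parts.
eapply Rle_trans; [apply Rabs_triang|]. apply Rplus_le_compat.
- eapply Rle_trans; [apply Rabs_lsum_le|]. apply lsum_le. intros k hk.
  apply in_seq in hk. rewrite Rabs_mult.
  apply Rmult_le_compat_l; [apply Rabs_pos | apply hB; lia].
- rewrite Rabs_mult. apply Rmult_le_compat_l; [apply Rabs_pos | apply hB; lia].
Qed.

Lemma Rabs_sum_mn_weighted_le p k w v M :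
  (forall j, 0 <= w j) -> (forall j, w j <= w (S j)) ->
  (forall j, (p <= j <= k)%nat -> Rabs (sum_mn p j v) <= M) -> (p <= k)%nat ->
  Rabs (sum_mn p k (fun j => w j * v j)) <= 2 * M * w k.
Proof.
intros hw0 hw hv hpk. replace k with (p + (k - p))%nat in * by lia.
set (L := (k - p)%nat) in *. clearbody L.
assert (hM : 0 <= M) by (eapply Rle_trans; [apply Rabs_pos | apply (hv p); lia]).
rewrite sum_mn_lsum. eapply Rle_trans; [apply (Rabs_lsum_by_parts_le _ _ _ _ (fun _ => M)); auto|].
rewrite (lsum_ext _ _ (fun j => M * (w (S j) - w j))).
- rewrite lsum_scal_l, lsum_telescope, Rabs_pos_eq by auto.
  specialize (hw0 p). nra.
- intros j _. rewrite Rabs_minus_sym, Rabs_pos_eq by (specialize (hw j); lra). ring.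
Qed.

Lemma pw_pos k beta : 0 < pw k beta.
Proof. apply exp_pos. Qed.

Lemma pw_le_S k beta : 0 <= beta -> pw k beta <= pw (S k) beta.
Proof.
intros hb. unfold pw. apply Rle_Rpower_l; auto. rewrite S_INR. pose proof (pos_INR k). lra.
Qed.

Lemma pw_le k m beta : 0 <= beta -> (k <= m)%nat -> pw k beta <= pw m beta.
Proof.
intros hb hkm. induction hkm; [lra|]. eapply Rle_trans; [apply IHhkm | now apply pw_le_S].
Qed.

Lemma pw_le_Rpower k m beta c : 0 <= beta -> 0 < c -> INR m + 1 <= c * (INR k + 1) ->
  pw m beta <= Rpower c beta * pw k beta.
Proof.
intros hb hc hmk. unfold pw. pose proof (pos_INR k). pose proof (pos_INR m).
rewrite Rpower_mult_distr by lra. apply Rle_Rpower_l; lra.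
Qed.

Lemma dterm_nonneg beta a k : 0 <= dterm beta a k.
Proof. apply Rmult_le_pos; [apply Rlt_le, pw_pos | apply Rabs_pos]. Qed.

Lemma dterm_last beta a n : a (S n) = 0 -> dterm beta a n = Rabs (a n).
Proof.
intros hz. unfold dterm. rewrite hz. pose proof (pw_pos n beta).
unfold Rdiv. rewrite Rmult_0_l, Rminus_0_r, Rabs_mult, Rabs_inv, (Rabs_pos_eq (pw n beta)) by lra.
field. lra.
Qed.

Lemma Rabs_sum_mn_le_dterm beta a v M p n : 0 <= beta -> a (S n) = 0 ->
  (forall k, (p <= k)%nat -> Rabs (sum_mn p k v) <= M) -> (p <= n)%nat ->
  Rabs (sum_mn p n (fun k => a k * v k)) <= 2 * M * sum_mn p n (dterm beta a).
Proof.
intros hb hz hv hpn. set (b k := a k / pw k beta).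
replace n with (p + (n - p))%nat in * by lia. set (L := (n - p)%nat) in *. clearbody L.
rewrite !sum_mn_lsum, (lsum_ext _ _ (fun k => b k * (pw k beta * v k)))
  by (intros k _; unfold b; field; apply Rgt_not_eq, pw_pos).
eapply Rle_trans.
{ apply (Rabs_lsum_by_parts_le _ _ _ _ (fun k => 2 * M * pw k beta)). intros k hk.
  apply Rabs_sum_mn_weighted_le; try lia.
  - intros; apply Rlt_le, pw_pos.
  - intros; now apply pw_le_S.
  - intros; apply hv; lia. }
rewrite lsum_seqS, Rmult_plus_distr_l, <- lsum_scal_l.
apply Req_le. f_equal.
- apply lsum_ext. intros k _. unfold dterm, b. ring.
- unfold dterm, b. rewrite hz. unfold Rdiv at 3. rewrite Rmult_0_l, Rminus_0_r. ring.
Qed.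

Lemma quarter_le_sin x : 0 <= x <= 2 -> x / 4 <= sin x.
Proof.
intros hx. pose proof PI2_3_2.
destruct (SIN x) as [Hlb _]; try lra. eapply Rle_trans; [|exact Hlb].
unfold sin_lb, sin_approx, sin_term; simpl.
(* On [0, 2]: [x - x^3/6 >= x/4] and [x^5/120 - x^7/5040 >= 0]. *)
assert (0 <= x * x <= 4) by nra.
assert (0 <= x * (x * x) * (x * x) * (1 - x * x / 42)) by (repeat apply Rmult_le_pos; nra).
assert (0 <= x * (3 - 2 * (x * x) / 3)) by (apply Rmult_le_pos; nra).
nra.
Qed.

Definition dirichlet (t : R) (k : nat) : R := sin ((INR k + / 2) * t) / (2 * sin (t / 2)).

Lemma Kn_dirichlet n a t : Kn n a t = sum_mn 0 n (fun k => a k * dirichlet t k).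
Proof. apply lsum_ext. intros k _. unfold dirichlet, Rdiv. ring. Qed.

Section Dirichlet.

Variable t : R.
Hypothesis ht : 0 < t <= PI.

Lemma sin_half_ge : t / 8 <= sin (t / 2).
Proof. pose proof PI_4. pose proof (quarter_le_sin (t / 2)). lra. Qed.

Lemma Rabs_dirichlet_le k : Rabs (dirichlet t k) <= 4 / t.
Proof.
pose proof sin_half_ge. unfold dirichlet, Rdiv.
rewrite Rabs_mult, Rabs_inv, (Rabs_pos_eq (2 * _)) by lra.
assert (Rabs (sin ((INR k + / 2) * t)) <= 1) by (apply Rabs_le, SIN_bound).
assert (/ (2 * sin (t / 2)) <= 4 * / t).
{ replace (4 * / t) with (/ (t / 4)) by (field; lra). apply Rinv_le_contravar; lra. }
assert (0 <= / (2 * sin (t / 2))) by (apply Rlt_le, Rinv_0_lt_compat; lra).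
pose proof (Rabs_pos (sin ((INR k + / 2) * t))). nra.
Qed.

Lemma dirichlet_telescope k :
  dirichlet t k = (cos (INR k * t) - cos (INR (S k) * t)) / (4 * sin (t / 2) ^ 2).
Proof.
pose proof sin_half_ge. unfold dirichlet. rewrite S_INR.
replace (INR k * t) with ((INR k + / 2) * t - t / 2) by field.
replace ((INR k + 1) * t) with ((INR k + / 2) * t + t / 2) by field.
rewrite cos_minus, cos_plus. field. lra.
Qed.

Lemma Rabs_lsum_dirichlet_le p L : Rabs (lsum (seq p L) (dirichlet t)) <= 32 / t ^ 2.
Proof.
pose proof sin_half_ge. set (s := sin (t / 2)) in *.
set (g j := - cos (INR j * t) / (4 * s ^ 2)).
rewrite (lsum_ext _ _ (fun j => g (S j) - g j))
  by (intros k _; rewrite dirichlet_telescope; unfold g; fold s; field; lra).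
rewrite lsum_telescope. unfold g.
set (c0 := cos (INR p * t)). set (c1 := cos (INR (p + L) * t)).
replace (- c1 / (4 * s ^ 2) - - c0 / (4 * s ^ 2)) with ((c0 - c1) * / (4 * s ^ 2)) by (field; lra).
rewrite Rabs_mult, Rabs_inv, (Rabs_pos_eq (4 * s ^ 2)) by nra.
assert (Rabs (c0 - c1) <= 2) by (pose proof (COS_bound (INR p * t));
  pose proof (COS_bound (INR (p + L) * t)); apply Rabs_le; unfold c0, c1; lra).
assert (/ (4 * s ^ 2) <= 16 / t ^ 2).
{ replace (16 / t ^ 2) with (/ (t ^ 2 / 16)) by (field; lra). apply Rinv_le_contravar; nra. }
assert (0 <= / (4 * s ^ 2)) by (apply Rlt_le, Rinv_0_lt_compat; nra).
pose proof (Rabs_pos (c0 - c1)). nra.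
Qed.

Lemma Rabs_sum_dirichlet_le_dterm beta a p n : 0 <= beta -> a (S n) = 0 -> (p <= n)%nat ->
  Rabs (sum_mn p n (fun k => a k * dirichlet t k)) <= 64 / t ^ 2 * sum_mn p n (dterm beta a).
Proof.
intros hb hz hpn. replace (64 / t ^ 2) with (2 * (32 / t ^ 2)) by (field; lra).
apply Rabs_sum_mn_le_dterm; auto. intros k _. apply Rabs_lsum_dirichlet_le.
Qed.

End Dirichlet.

Lemma PI_div_lt_tau t : 0 < t <= PI -> PI / t < INR (tau t) + 1.
Proof.
intros ht.
assert (1 <= PI / t) by (apply (Rmult_le_reg_r t); [lra|]; field_simplify; lra).
destruct (base_Int_part (PI / t)) as [b1 b2].
assert (hz : (0 <= Int_part (PI / t))%Z) by (apply le_IZR; simpl; lra).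
unfold tau. rewrite INR_IZR_INZ, Z2Nat.id by auto. lra.
Qed.

Section Tail_condition.

Variables (beta C : R) (n : nat) (a : nat -> R).
Hypotheses (hbeta : 0 <= beta) (hC : 0 < C) (hzero : forall k, (n < k)%nat -> a k = 0).
Hypothesis hsum : forall m, (m <= n)%nat -> sum_mn m n (dterm beta a) <= C * a m.

Lemma coef_nonneg k : 0 <= a k.
Proof.
destruct (le_lt_dec k n) as [hk|hk]; [|rewrite hzero; auto; lra].
assert (0 <= sum_mn k n (dterm beta a)) by (apply lsum_nonneg; intros; apply dterm_nonneg).
pose proof (hsum k hk). nra.
Qed.

Lemma weighted_coef_quasi_decreasing k m : (k <= m <= n)%nat ->
  a m / pw m beta <= (1 + C) * (a k / pw k beta).
Proof.
intros hkm. set (b j := a j / pw j beta). pose proof (pw_pos k beta) as hpk.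
assert (Htel : pw k beta * (b m - b k) <= lsum (seq k (m - k)) (dterm beta a)).
{ replace (b m - b k) with (lsum (seq k (m - k)) (fun j => b (S j) - b j))
    by (rewrite lsum_telescope; do 2 f_equal; lia).
  rewrite <- lsum_scal_l. apply lsum_le. intros j hj. apply in_seq in hj.
  unfold dterm. fold (b j) (b (S j)). rewrite Rabs_minus_sym.
  pose proof (pw_le k j beta hbeta ltac:(lia)). pose proof (Rle_abs (b (S j) - b j)).
  pose proof (Rabs_pos (b (S j) - b j)). nra. }
assert (Hsplit : lsum (seq k (m - k)) (dterm beta a) <= sum_mn k n (dterm beta a)).
{ rewrite (sum_mn_split k m n) by lia.
  assert (0 <= sum_mn m n (dterm beta a)) by (apply lsum_nonneg; intros; apply dterm_nonneg).
  lra. }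
pose proof (hsum k ltac:(lia)) as Hk.
replace (a k) with (pw k beta * b k) in Hk by (unfold b; field; lra).
fold (b m) (b k). nra.
Qed.

Lemma coef_le_Rpower3 k m : (k <= m <= n)%nat -> (m + 1 <= 3 * (k + 1))%nat ->
  a m <= (1 + C) * Rpower 3 beta * a k.
Proof.
intros hkm h3. pose proof (weighted_coef_quasi_decreasing k m hkm) as Hq.
assert (Hw : pw m beta <= Rpower 3 beta * pw k beta).
{ apply pw_le_Rpower; auto; [lra|]. apply le_INR in h3.
  rewrite mult_INR, !plus_INR in h3. simpl INR in h3. lra. }
pose proof (pw_pos k beta). pose proof (pw_pos m beta). pose proof (coef_nonneg k).
replace (a m) with (pw m beta * (a m / pw m beta)) by (field; lra).
replace (a k) with (pw k beta * (a k / pw k beta)) by (field; lra).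
set (bm := a m / pw m beta) in *. set (bk := a k / pw k beta) in *.
assert (Hbk : 0 <= bk) by (apply Rdiv_nonneg; lra).
apply Rmult_le_compat_l with (r := pw m beta) in Hq; [|lra].
assert (0 <= (1 + C) * bk) by nra. nra.
Qed.

Lemma mul_coef_le_lsum m : (m <= n)%nat ->
  INR m * a m <= 2 * ((1 + C) * Rpower 3 beta) * lsum (seq 0 m) a.
Proof.
intros hmn. set (K := (1 + C) * Rpower 3 beta). set (s := (m / 2)%nat).
assert (hs : (2 * s <= m <= 2 * s + 1)%nat)
  by (pose proof (Nat.div_mod_eq m 2); pose proof (Nat.mod_upper_bound m 2); unfold s; lia).
assert (hK : 0 < K) by (apply Rmult_lt_0_compat; [lra | apply exp_pos]).
assert (Htail : INR (m - s) * a m <= K * lsum (seq s (m - s)) a).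
{ rewrite <- (length_seq (m - s) s) at 1. rewrite <- lsum_const, <- lsum_scal_l.
  apply lsum_le. intros k hk. apply in_seq in hk. apply coef_le_Rpower3; lia. }
assert (Hhead : 0 <= lsum (seq 0 s) a) by (apply lsum_nonneg; intros; apply coef_nonneg).
replace m with (s + (m - s))%nat at 3 by lia. rewrite lsum_seq_add, Nat.add_0_l.
assert (INR m <= 2 * INR (m - s))
  by (replace 2 with (INR 2) by (simpl; lra); rewrite <- mult_INR; apply le_INR; lia).
pose proof (coef_nonneg m). nra.
Qed.

Lemma coef_succ_tau_le t : 0 < t <= PI -> (tau t < n)%nat ->
  a (S (tau t)) / t <= (1 + C) * Rpower 3 beta * Atau a t.
Proof.
intros ht hTn. set (T := tau t). set (K := (1 + C) * Rpower 3 beta).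
pose proof (PI_div_lt_tau t ht) as HT. fold T in HT. rewrite <- S_INR in HT.
pose proof (mul_coef_le_lsum (S T) hTn) as Hm. fold K in Hm.
change (lsum (seq 0 (S T)) a) with (Atau a t) in Hm.
pose proof PI2_3_2. pose proof (coef_nonneg (S T)).
assert (Hu : 0 <= a (S T) / t) by (apply Rdiv_nonneg; lra).
assert (PI * (a (S T) / t) <= INR (S T) * a (S T)).
{ replace (PI * (a (S T) / t)) with (PI / t * a (S T)) by (field; lra). nra. }
nra.
Qed.

Lemma Rabs_sum_after_tau_le t : 0 < t <= PI -> (tau t < n)%nat ->
  Rabs (sum_mn (S (tau t)) n (fun k => a k * dirichlet t k))
  <= 64 * C * ((1 + C) * Rpower 3 beta) * (Atau a t / t).
Proof.
intros ht hTn. set (T := tau t). set (K := (1 + C) * Rpower 3 beta).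
eapply Rle_trans; [apply (Rabs_sum_dirichlet_le_dterm t ht beta); auto; lia|].
pose proof (hsum (S T) hTn) as Hs. pose proof (coef_succ_tau_le t ht hTn) as Hc. fold T K in Hc.
assert (0 < 64 / t ^ 2) by (apply Rdiv_lt_0_compat; [lra | apply pow_lt; lra]).
assert (0 <= 64 * C / t) by (apply Rdiv_nonneg; lra).
replace (64 * C * K * (Atau a t / t)) with (64 * C / t * (K * Atau a t)) by (field; lra).
eapply Rle_trans; [apply Rmult_le_compat_l; [lra | exact Hs]|].
replace (64 / t ^ 2 * (C * a (S T))) with (64 * C / t * (a (S T) / t)) by (field; lra).
apply Rmult_le_compat_l; lra.
Qed.

Lemma Rabs_Kn_le_Atau t : 0 < t <= PI ->
  Rabs (Kn n a t) <= (4 + 64 * C * ((1 + C) * Rpower 3 beta)) * (Atau a t / t).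
Proof.
intros ht. rewrite Kn_dirichlet. set (T := tau t). set (K := (1 + C) * Rpower 3 beta).
assert (hK : 0 < K) by (apply Rmult_lt_0_compat; [lra | apply exp_pos]).
assert (hA : 0 <= Atau a t / t)
  by (apply Rdiv_nonneg; [apply lsum_nonneg; intros; apply coef_nonneg | lra]).
assert (Hhead : forall N,
  Rabs (lsum (seq 0 N) (fun k => a k * dirichlet t k)) <= 4 / t * lsum (seq 0 N) a)
  by (intros; apply Rabs_lsum_le_nonneg; [apply coef_nonneg | apply Rabs_dirichlet_le; auto]).
replace (4 / t) with (4 * / t) in Hhead by reflexivity.
destruct (le_lt_dec n T) as [hnT | hTn].
- assert (Hsub : sum_mn 0 n a <= Atau a t).
  { unfold Atau. rewrite (sum_mn_split 0 (S n) T) by lia.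
    assert (0 <= sum_mn (S n) T a) by (apply lsum_nonneg; intros; apply coef_nonneg).
    change (lsum (seq 0 (S n - 0)) a) with (sum_mn 0 n a). lra. }
  eapply Rle_trans; [apply (Hhead (S n))|]. change (lsum (seq 0 (S n)) a) with (sum_mn 0 n a).
  assert (0 <= 64 * C * K * (Atau a t / t)) by (apply Rmult_le_pos; [nra | lra]).
  unfold Rdiv in *. assert (0 < / t) by (apply Rinv_0_lt_compat; lra). nra.
- rewrite (sum_mn_split 0 (S T) n) by lia.
  eapply Rle_trans; [apply Rabs_triang|].
  pose proof (Rabs_sum_after_tau_le t ht hTn) as Htail. pose proof (Hhead (S T)) as Hh.
  change (lsum (seq 0 (S T)) a) with (Atau a t) in Hh. unfold Rdiv in *. fold T K in Htail.
  simpl (S T - 0)%nat. lra.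
Qed.

End Tail_condition.

Lemma Rabs_Kn_le_last beta C n a t : 0 <= beta -> 0 < C -> a (S n) = 0 ->
  lsum (seq 0 n) (dterm beta a) <= C * a n -> 0 < t <= PI ->
  Rabs (Kn n a t) <= 64 * (1 + C) * (a n / t ^ 2).
Proof.
intros hb hC hz hs ht. rewrite Kn_dirichlet.
eapply Rle_trans; [apply (Rabs_sum_dirichlet_le_dterm t ht beta); auto; lia|].
change (sum_mn 0 n (dterm beta a)) with (lsum (seq 0 (S n)) (dterm beta a)).
rewrite lsum_seqS, Nat.add_0_l, dterm_last by auto.
assert (0 <= lsum (seq 0 n) (dterm beta a)) by (apply lsum_nonneg; intros; apply dterm_nonneg).
assert (han : 0 <= a n) by nra. rewrite Rabs_pos_eq by auto.
assert (0 < 64 / t ^ 2) by (apply Rdiv_lt_0_compat; [lra | apply pow_lt; lra]).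
replace (64 * (1 + C) * (a n / t ^ 2)) with (64 / t ^ 2 * (C * a n + a n)) by (field; lra).
apply Rmult_le_compat_l; lra.
Qed.

Theorem lemma2p4 (beta C : R) (hbeta : 0 <= beta) (hC : 0 < C) :
  (exists C1 : R, 0 < C1 /\
     forall (n : nat) (a : nat -> R),
       (forall k, (n < k)%nat -> a k = 0) ->
       (forall m, (m <= n)%nat -> sum_mn m n (dterm beta a) <= C * a m) ->
       forall t, 0 < t -> t <= PI -> Rabs (Kn n a t) <= C1 * (Atau a t / t))
  /\
  (exists C2 : R, 0 < C2 /\
     forall (n : nat) (a : nat -> R),
       (forall k, (n < k)%nat -> a k = 0) ->
       (forall m, (m <= n)%nat -> lsum (seq 0 m) (dterm beta a) <= C * a m) ->
       forall t, 0 < t -> t <= PI -> Rabs (Kn n a t) <= C2 * (a n / t ^ 2)).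
Proof.
split.
- exists (4 + 64 * C * ((1 + C) * Rpower 3 beta)). split.
  + assert (0 < Rpower 3 beta) by apply exp_pos. nra.
  + intros n a hzero hsum t ht0 htPI. now apply Rabs_Kn_le_Atau.
- exists (64 * (1 + C)). split; [lra|].
  intros n a hzero hsum t ht0 htPI. apply (Rabs_Kn_le_last beta C); auto.
Qed.
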